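(* Let $\ell,k$ be positive integers. Consider RSA-PFDH$^\oplus$ with message space $\{0,1\}^\ell$ and hash function $h:\{0,1\}^{\ell+k}\to\{0,1\}^k$, in the chosen prefix second preimage tractable random oracle model $\mathrm{CP\text{-}SPT\text{-}ROM}_{(\ell,k,k)}$. There exists a PPT adversary $\mathcal{A}$ that, by making queries to the signing oracle and to $\mathcal{CP\text{-}SPO}^h$, breaks RSA-PFDH$^\oplus$ (outputs a valid EUF-CMA forgery) with probability at least $1-e^{(1-2^{\ell})/2^k}$.
   Context: Model $\mathrm{CP\text{-}SPT\text{-}ROM}_{(\ell,k,k)}$: let $M=\{0,1\}^{\ell}$, $R=\{0,1\}^{k}$, $X=M\times R$ (elements written as strings $m\|r$), $Y=\{0,1\}^k$, and $h:X\to Y$ a uniformly random function with table $\mathbb{T}_h$. All parties may query $\mathcal{RO}^h(x)$, returning $h(x)$, and $\mathcal{CP\text{-}SPO}^h(x,r')$: given $|x|=\ell+k$ and $|r'|=k$, let $y=h(x)$; if there is an entry $(m'\|r',y)\in\mathbb{T}_h$ with $m'\|r'\ne x$, it returns such an $m'\|r'$ uniformly at random; otherwise $\perp$. RSA-PFDH$^\oplus$: $\mathsf{RSAGen}(1^k)$ gives $(N,e,d)$ with $N=pq$ for distinct random $k/2$-bit primes, random $e\in\mathbb{Z}_{\phi}$, $ed\equiv1\pmod{\phi}$, $\phi=(p-1)(q-1)$; $vk=(N,e)$, $sk=(N,d)$. $\mathsf{Sign}(sk,m)$: pick $r\in\{0,1\}^k$ uniformly, $y=h(m\|r)\oplus r$,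 output $\sigma=(r,y^d\bmod N)$. $\mathsf{Verify}(vk,m,(r,x))=1$ iff $h(m\|r)\oplus r=x^e\bmod N$. EUF-CMA game: the adversary receives $vk$, may query the signing oracle and the model's oracles, and outputs $(m^*,\sigma^* )$; it breaks the scheme if $\mathsf{Verify}(vk,m^*,\sigma^* )=1$ and $m^*$ was never queried to the signing oracle. *)

From HB Require Import structures.
From mathcomp Require Import all_boot all_order all_algebra.
From mathcomp Require Import reals sequences exp.
Set Implicit Arguments. Unset Strict Implicit. Unset Printing Implicit Defensive.
Import Order.TTheory GRing.Theory Num.Theory.

Definition bits (n : nat) := (n.-tuple bool)%type.

Definition nat_of_bits (s : seq bool) : nat :=
  foldl (fun acc (b : bool) => acc.*2 + b) 0 s.

(* big-endian n-bit encoding of x (x taken modulo 2^n) *)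
Definition bits_of_nat (n x : nat) : seq bool :=
  rev [seq odd (x %/ 2 ^ i) | i <- iota 0 n].

Definition xors (s t : seq bool) : seq bool := [seq p.1 (+) p.2 | p <- zip s t].

Definition tup (n : nat) (s : seq bool) : option (bits n) := insub s.

Definition rsa_phi (p q : nat) : nat := (p.-1 * q.-1)%N.

Definition rsa_keys (k : nat) : {set 'I_(2 ^ k) * 'I_(2 ^ k) * 'I_(2 ^ k)} :=
  [set t : 'I_(2 ^ k) * 'I_(2 ^ k) * 'I_(2 ^ k) | let: (p, q, e) := t in
     [&& prime p, prime q, (p != q :> nat),
         (2 ^ (k./2).-1 <= p < 2 ^ k./2)%N,
         (2 ^ (k./2).-1 <= q < 2 ^ k./2)%N,
         (e < rsa_phi p q)%N & coprime e (rsa_phi p q)]].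

(* d with e * d = 1 (mod phi), via the extended gcd *)
Definition rsa_d (p q e : nat) : nat := ((egcdn e (rsa_phi p q)).1 %% rsa_phi p q)%N.

Definition hashfun (l k : nat) := {ffun bits l * bits k -> bits k}.

Definition rsa_verify (l k : nat) (h : hashfun l k) (N e : nat)
    (m : bits l) (r : bits k) (x : nat) : bool :=
  (nat_of_bits (xors (h (m, r)) r) == x ^ e %[mod N])%N.

(* No operation can increase string lengths beyond those of inputs/constants,
   so a program runs in time polynomial in its size and in l, k. *)
Inductive expr : Type :=
| EVar of nat
| EConst of seq bool
| EXor of expr & expr
| ETake of nat & expr
| EDrop of nat & expr.

Inductive prog : Type :=
| POut of expr & expr & expr            (* output forgery (m_out, (r_out, x_out)) *)
| PSign of expr & prog                  (* Sign(m); appends registers r, x *)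
| PRO of expr & expr & prog             (* RO(m||r); appends h(m||r) *)
| PSPO of expr & expr & expr & prog & prog
    (* CP-SPO(m||r, r'): if bottom continue with the 1st program,
       else append registers m', r' and continue with the 2nd *)
| PIf of expr & expr & prog & prog.

Fixpoint esize (a : expr) : nat :=
  match a with
  | EVar i => i.+1
  | EConst s => (size s).+1
  | EXor a b => (esize a + esize b).+1
  | ETake n a => (n + esize a).+1
  | EDrop n a => (n + esize a).+1
  end.

Fixpoint psize (p : prog) : nat :=
  match p with
  | POut a b c => (esize a + esize b + esize c).+1
  | PSign a p => (esize a + psize p).+1
  | PRO a b p => (esize a + esize b + psize p).+1
  | PSPO a b c p1 p2 => (esize a + esize b + esize c + psize p1 + psize p2).+1
  | PIf a b p1 p2 => (esize a + esize b + psize p1 + psize p2).+1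
  end.

Fixpoint eval (env : seq (seq bool)) (a : expr) : seq bool :=
  match a with
  | EVar i => nth [::] env i
  | EConst s => s
  | EXor a b => xors (eval env a) (eval env b)
  | ETake n a => take n (eval env a)
  | EDrop n a => drop n (eval env a)
  end.

Local Open Scope ring_scope.

Section Run.
Variables (R : numFieldType) (l k : nat) (h : hashfun l k) (N e d : nat).

(* Q = messages queried to the signing oracle; env = registers *)
Fixpoint run (Q : seq (bits l)) (env : seq (seq bool)) (p : prog) : R :=
  match p with
  | POut am ar ax =>
      match tup l (eval env am), tup k (eval env ar) with
      | Some m, Some r =>
          if (m \notin Q) && rsa_verify h N e m r (nat_of_bits (eval env ax))
          then 1 else 0
      | _, _ => 0
      end
  | PSign am p' =>
      match tup l (eval env am) with
      | Some m =>
          (\sum_(r : bits k)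
             run (m :: Q)
               (env ++ [:: val r;
                  bits_of_nat k ((nat_of_bits (xors (h (m, r)) r)) ^ d %% N)%N]) p')
          / #|{: bits k}|%:R
      | None => run Q (env ++ [:: [::]; [::]]) p'
      end
  | PRO am ar p' =>
      let ans := match tup l (eval env am), tup k (eval env ar) with
                 | Some m, Some r => val (h (m, r))
                 | _, _ => [::]
                 end in
      run Q (rcons env ans) p'
  | PSPO am ar ar' pn ps =>
      match tup l (eval env am), tup k (eval env ar), tup k (eval env ar') with
      | Some m, Some r, Some r' =>
          let S := [set x' : bits l * bits k |
                     [&& x'.2 == r', x' != (m, r) & h x' == h (m, r)]] in
          if S == set0 then run Q env pn
          else (\sum_(x' in S) run Q (env ++ [:: val x'.1; val x'.2]) ps)
               / #|S|%:R
      | _, _, _ => run Q env pn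
      end
  | PIf a b p1 p2 => if eval env a == eval env b then run Q env p1 else run Q env p2
  end.
End Run.

Definition adv_success (R : numFieldType) (l k : nat) (A : prog) : R :=
  (\sum_(t in rsa_keys k)
     let: (p, q, e) := t in
     let N := (p * q)%N in
     (\sum_(h : hashfun l k)
        run R h N e (rsa_d p q e) [::] [:: bits_of_nat k N; bits_of_nat k e] A)
     / #|{: hashfun l k}|%:R)
  / #|rsa_keys k|%:R.

From mathcomp Require Import all_boot all_order all_algebra.
From mathcomp Require Import reals sequences exp lra.
From mathcomp Require Import zify.
Import Order.TTheory GRing.Theory Num.Theory.

(* The forger signs [m0 = 0^l], receiving [(r, s)], and asks CP-SPO for some
   [m' || r <> m0 || r] with [h (m' || r) = h (m0 || r)]; then [(r, s)] is also
   a valid signature of [m'], which was never queried.  For a uniform [h] the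
   [2^l - 1] values [h (m' || r)] are independent of [h (m0 || r)] and uniform,
   so they all miss it with probability [(1 - 2^-k)^(2^l - 1)], which is at
   most [exp ((1 - 2^l) / 2^k)]. *)

Set Implicit Arguments.
Unset Strict Implicit.
Unset Printing Implicit Defensive.

Lemma nat_of_bits_rcons s b : nat_of_bits (rcons s b) = (nat_of_bits s).*2 + b.
Proof. by rewrite /nat_of_bits foldl_rcons. Qed.

Lemma bits_of_natS n x : bits_of_nat n.+1 x = rcons (bits_of_nat n x./2) (odd x).
Proof.
rewrite /bits_of_nat /= rev_cons divn1 -divn2; congr rcons.
rewrite (iotaDl 1 0) -map_comp; congr rev; apply: eq_map => i /=.
by rewrite expnS divnMA.
Qed.

Lemma tupK n (t : bits n) : tup n (val t) = Some t.
Proof. by rewrite /tup valK. Qed.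

Lemma bits_of_natK n x : x < 2 ^ n -> nat_of_bits (bits_of_nat n x) = x.
Proof.
elim: n x => [|n IHn] x; first by case: x.
move=> ltx; rewrite bits_of_natS nat_of_bits_rcons IHn.
  by rewrite addnC odd_double_half.
by rewrite ltn_half_double -mul2n -expnS.
Qed.

Lemma fermat_little_iter p y t : prime p -> y ^ (1 + t * p.-1) = y %[mod p].
Proof.
move=> p_pr; elim: t => [|t IHt]; first by rewrite mul0n addn0 expn1.
rewrite mulSn addnCA expnD -modnMmr IHt modnMmr -expnSr prednK ?prime_gt0 //.
exact: fermat_little.
Qed.

Lemma rsa_phi_gt1 p q : prime p -> prime q -> p != q -> 1 < rsa_phi p q.
Proof.
move=> /prime_gt1 p_gt1 /prime_gt1 q_gt1 /eqP neq_pq; rewrite /rsa_phi.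
have [[-> q_ge3]|p_ge3] : p = 2 /\ 3 <= q \/ 3 <= p by lia.
  by nia.
by nia.
Qed.

Lemma modn_rsa_ed p q e : prime p -> prime q -> p != q ->
  coprime e (rsa_phi p q) -> e * rsa_d p q e %% rsa_phi p q = 1.
Proof.
move=> p_pr q_pr neq_pq co_e; have phi_gt1 := rsa_phi_gt1 p_pr q_pr neq_pq.
have e_gt0 : 0 < e by case: e co_e => // /eqP; rewrite gcd0n; lia.
rewrite /rsa_d; case: (egcdnP (rsa_phi p q) e_gt0) => u v Bezout _ /=.
by rewrite modnMmr mulnC Bezout (eqP co_e) -modnDml modnMl modn_small.
Qed.

Lemma rsa_dK p q e y : prime p -> prime q -> p != q -> coprime e (rsa_phi p q) ->
  (y ^ rsa_d p q e %% (p * q)) ^ e = y %[mod p * q].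
Proof.
move=> p_pr q_pr neq_pq co_e.
have co_pq : coprime p q by rewrite prime_coprime // dvdn_prime2.
rewrite modnXm -expnM mulnC (divn_eq (e * _) (rsa_phi p q)).
rewrite modn_rsa_ed // addnC /rsa_phi.
apply/eqP; rewrite chinese_remainder //; apply/andP; split; apply/eqP.
  by rewrite mulnCA mulnC fermat_little_iter.
by rewrite mulnA fermat_little_iter.
Qed.

Local Open Scope ring_scope.

Lemma prodr_natb (R : pzSemiRingType) (I : finType) (B : pred I) :
  \prod_i ((B i)%:R : R) = [forall i, B i]%:R.
Proof.
have natb_and : {morph nat_of_bool : a b / a && b >-> (a * b)%N} by move=> [] [].
by rewrite -natr_prod -(big_morph _ natb_and (erefl : nat_of_bool true = 1%N)) big_andE.
Qed.

Section AvoidingFunctions.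
Variables (R : numFieldType) (X Y : finType) (x0 : X) (T : {set X}).
Hypotheses (x0_notin_T : x0 \notin T) (Y_gt0 : (0 < #|Y|)%N).

Local Notation K := (#|Y|%:R : R).

(* Splitting on the value [y0 = h x0] turns the indicator of
   [{in T, forall x, h x != h x0}] into a sum of products of conditions on the
   single values [h x]; a product of such conditions averages, over uniform
   [h], to the product of the averages. *)
Let avoid_at (y0 : Y) (x : X) (y : Y) : bool :=
  ((x == x0) ==> (y == y0)) && ((x \in T) ==> (y != y0)).

Lemma indicator_avoid_sum (h : {ffun X -> Y}) :
  [forall x in T, h x != h x0]%:R = \sum_y0 \prod_x (avoid_at y0 x (h x))%:R :> R.
Proof.
under eq_bigr do rewrite prodr_natb.
rewrite (bigD1 (h x0)) //= big1 ?addr0; last first.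
  move=> y0 neq_y0; rewrite /avoid_at; case: forallP => // /(_ x0).
  by rewrite eqxx eq_sym (negbTE neq_y0).
suff -> : [forall x, avoid_at (h x0) x (h x)] = [forall x in T, h x != h x0] by [].
apply/forallP/forall_inP => [avoid x xT|avoid x].
  by have /andP[_] := avoid x; rewrite xT.
rewrite /avoid_at; case: eqVneq => [->|_] /=; first by rewrite eqxx (negbTE x0_notin_T).
exact/implyP/avoid.
Qed.

Lemma sum_avoid_at y0 x :
  \sum_y (avoid_at y0 x y)%:R = if x == x0 then 1 else if x \in T then K - 1 else K.
Proof.
rewrite /avoid_at; case: eqVneq => [->|_] /=.
  rewrite (negbTE x0_notin_T) (bigD1 y0) //= eqxx big1 ?addr0 // => y /negbTE -> //.
case: (x \in T) => /=; last by rewrite sumr_const.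
rewrite (eq_bigr (fun y => 1 - (y == y0)%:R)); last first.
  by move=> y _; case: (y == y0); rewrite ?subrr ?subr0.
rewrite sumrB sumr_const (bigD1 y0) //= eqxx big1 ?addr0 // => y /negbTE -> //.
Qed.

Lemma sum_ffun_avoid :
  \sum_(h : {ffun X -> Y}) [forall x in T, h x != h x0]%:R =
  #|{ffun X -> Y}|%:R * (1 - K^-1) ^+ #|T| :> R.
Proof.
have K_neq0 : K != 0 by rewrite pnatr_eq0 -lt0n.
have prod_sum y0 :
    \prod_x \sum_y (avoid_at y0 x y)%:R = K ^+ #|X| * (K^-1 * (1 - K^-1) ^+ #|T|).
  rewrite (eq_bigr (fun x => K * ((\sum_y (avoid_at y0 x y)%:R) / K))); last first.
    by move=> x _; rewrite mulrC divfK.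
  rewrite big_split prodr_const; congr (_ * _).
  rewrite (eq_bigr (fun x =>
      (if x == x0 then K^-1 else 1) * (if x \in T then 1 - K^-1 else 1))).
    by rewrite big_split -!big_mkcond /= big_pred1_eq prodr_const.
  move=> x _; rewrite sum_avoid_at; case: eqVneq => [->|_].
    by rewrite (negbTE x0_notin_T) div1r mulr1.
  by case: (x \in T); rewrite mul1r ?mulrBl ?mul1r divff.
have card_ffunE : #|{ffun X -> Y}|%:R = K ^+ #|X| by rewrite card_ffun natrX.
under eq_bigr do rewrite indicator_avoid_sum.
rewrite exchange_big /=.
under eq_bigr => y0 _.
  rewrite -(bigA_distr_bigA (fun x y => (avoid_at y0 x y)%:R : R)) prod_sum.
  over.
by rewrite sumr_const card_ffunE -mulrnAr -mulrnAl -[_^-1 *+ _]mulr_natr mulVf ?mul1r.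
Qed.

End AvoidingFunctions.

Section PrefixCollisions.
Variables (M S Y : finType).

Definition same_suffix (x : M * S) : {set M * S} :=
  [set x' | (x'.2 == x.2) && (x' != x)].

(* The set from which CP-SPO samples on the query [(x, x.2)]. *)
Definition prefix_collisions (h : {ffun M * S -> Y}) (x : M * S) : {set M * S} :=
  [set x' | [&& x'.2 == x.2, x' != x & h x' == h x]].

Lemma same_suffixE x : same_suffix x = [set (m, x.2) | m in [set~ x.1]].
Proof.
apply/setP => -[m s]; rewrite inE /=; apply/andP/imsetP => [[/eqP-> neq_x]|].
  by exists m; rewrite // in_setC1; apply: contraNneq neq_x => ->; case: x.
move=> [m' + [-> ->]]; rewrite in_setC1 => neq_m'; split=> //.
by apply: contraNneq neq_m' => <-.
Qed.

Lemma card_same_suffix x : #|same_suffix x| = #|M|.-1.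
Proof.
by rewrite same_suffixE card_imset ?cardsC1 // => m m' [].
Qed.

Lemma prefix_collisions_eq0 h x :
  (prefix_collisions h x == set0) = [forall x' in same_suffix x, h x' != h x].
Proof.
apply/eqP/forall_inP => [coll0 x' x'_suffix|avoid].
  apply/negP => eq_h; have : x' \in prefix_collisions h x.
    by move: x'_suffix; rewrite !inE eq_h => /andP[-> ->].
  by rewrite coll0 inE.
apply/setP => x'; rewrite !inE; apply/and3P => -[eq_s neq_x eq_h].
by have := avoid x'; rewrite inE eq_s neq_x eq_h => /(_ isT).
Qed.

Lemma prefix_collision_prob (R : numFieldType) x : (0 < #|Y|)%N ->
  (\sum_(h : {ffun M * S -> Y}) (prefix_collisions h x != set0)%:R)
    / #|{ffun M * S -> Y}|%:R = 1 - (1 - (#|Y|%:R : R)^-1) ^+ #|M|.-1.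
Proof.
move=> Y_gt0; have x_notin : x \notin same_suffix x by rewrite inE !eqxx.
have H_neq0 : #|{ffun M * S -> Y}|%:R != 0 :> R.
  by rewrite pnatr_eq0 card_ffun expn_eq0 negb_and -lt0n Y_gt0.
rewrite (eq_bigr (fun h : {ffun M * S -> Y} =>
    1 - [forall x' in same_suffix x, h x' != h x]%:R)); last first.
  by move=> h _; rewrite prefix_collisions_eq0 -sub1b natrB ?leq_b1.
rewrite sumrB sumr_const sum_ffun_avoid // card_same_suffix.
by rewrite mulrBl divff // mulrAC divff // mul1r.
Qed.

End PrefixCollisions.

Lemma exprn_le_expR (R : realType) (x : R) n :
  -1 <= x -> (1 + x) ^+ n <= expR (n%:R * x).
Proof.
by move=> x_ge; rewrite expRM_natl lerXn2r ?nnegrE ?expR_ge1Dx ?expR_ge0 //; lra.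
Qed.

Lemma ler_mean (R : numFieldType) (I : finType) (A : {pred I}) (F : I -> R) b :
  (0 < #|A|)%N -> (forall i, i \in A -> b <= F i) ->
  b <= (\sum_(i in A) F i) / #|A|%:R.
Proof.
move=> A_gt0 F_ge; rewrite ler_pdivlMr ?ltr0n // mulr_natr -sumr_const.
exact: ler_sum.
Qed.

(* Registers 0 and 1 hold [N] and [e]; signing [0^l] appends [r] and the
   signature as registers 2 and 3, and a successful CP-SPO query appends the
   second preimage [m' || r] as registers 4 and 5.  On a failed query the
   forger outputs the empty message, which is not an [l]-bit string. *)
Definition forger (l : nat) : prog :=
  PSign (EConst (nseq l false))
    (PSPO (EConst (nseq l false)) (EVar 2) (EVar 2)
       (POut (EConst [::]) (EVar 2) (EVar 3))
       (POut (EVar 4) (EVar 2) (EVar 3))).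

Lemma psize_forger l : psize (forger l) = (2 * l + 32)%N.
Proof. by rewrite /= size_nseq; lia. Qed.

Lemma run_forger (R : numFieldType) l k (h : hashfun l k) N e d env :
  (0 < l)%N -> (0 < N)%N -> (N <= 2 ^ k)%N -> size env = 2%N ->
  (forall y, (y ^ d %% N) ^ e = y %[mod N])%N ->
  run R h N e d [::] env (forger l) =
  (\sum_(r : bits k) (prefix_collisions h (nseq_tuple l false, r) != set0)%:R)
    / #|{: bits k}|%:R.
Proof.
move=> l_gt0 N_gt0 N_le size_env rsa; rewrite /=.
have -> : tup l (nseq l false) = Some (nseq_tuple l false) by exact: tupK.
congr (_ / _); apply: eq_bigr => r _.
case: env size_env => [|? [|? []]] //= _; rewrite !tupK.
rewrite -/(prefix_collisions h (nseq_tuple l false, r)).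
case: ifP => [_|/negbT coll_neq0].
  have tup_nil : tup l [::] = None by rewrite /tup insubF // eq_sym gtn_eqF.
  by rewrite tup_nil mulr0n.
rewrite (eq_bigr (fun _ => 1 : R)); last first.
  move=> [m' r']; rewrite inE /= => /and3P[/eqP-> neq_x /eqP eq_h].
  have neq_m' : m' != nseq_tuple l false by apply: contraNneq neq_x => ->.
  rewrite tupK inE neq_m' /rsa_verify eq_h bits_of_natK ?rsa ?eqxx //.
  exact: leq_trans (ltn_pmod _ N_gt0) N_le.
by rewrite sumr_const divff ?mulr1n // pnatr_eq0 -lt0n card_gt0.
Qed.

Lemma no_collision_le_expR (R : realType) l k :
  (1 - (2 ^+ k)^-1) ^+ (2 ^ l).-1 <= expR ((1 - 2 ^+ l) / 2 ^+ k) :> R.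
Proof.
have -> : (1 - 2 ^+ l) / 2 ^+ k = (2 ^ l).-1%:R * - (2 ^+ k)^-1 :> R.
  by rewrite -subn1 natrB ?expn_gt0 // natrX mulrN -mulNr opprB.
apply: exprn_le_expR; rewrite lerN2 invf_le1 ?exprn_gt0 //.
by rewrite exprn_ege1 ?ler1n.
Qed.

Lemma forger_key_success (R : realType) l k p q e : (0 < l)%N ->
  prime p -> prime q -> p != q -> (p < 2 ^ k./2)%N -> (q < 2 ^ k./2)%N ->
  coprime e (rsa_phi p q) ->
  1 - expR ((1 - 2 ^+ l) / 2 ^+ k) <=
  (\sum_(h : hashfun l k) run R h (p * q) e (rsa_d p q e) [::]
       [:: bits_of_nat k (p * q); bits_of_nat k e] (forger l))
    / #|{: hashfun l k}|%:R.
Proof.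
move=> l_gt0 p_pr q_pr neq_pq p_lt q_lt co_e.
have N_gt0 : (0 < p * q)%N by rewrite muln_gt0 !prime_gt0.
have N_le : (p * q <= 2 ^ k)%N.
  rewrite (leq_trans (ltnW (ltn_mul p_lt q_lt))) // -expnD addnn.
  by rewrite leq_pexp2l // -{2}(odd_double_half k) leq_addl.
have rsa y := rsa_dK y p_pr q_pr neq_pq co_e.
have bits_gt0 : (0 < #|{: bits k}|)%N by apply/card_gt0P; exists (nseq_tuple k false).
under eq_bigr do rewrite run_forger //.
rewrite -mulr_suml exchange_big mulrAC mulr_suml; apply: ler_mean => // r _.
rewrite prefix_collision_prob //.
by rewrite !card_tuple card_bool natrX lerD2l lerN2 no_collision_le_expR.
Qed.

Theorem theorem5 (R : realType) :
  exists A : nat -> nat -> prog,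
    (exists c : nat, forall l k : nat, (psize (A l k) <= c * (l + k).+1 ^ c)%N) /\
    (forall l k : nat, (0 < l)%N -> (0 < k)%N -> (0 < #|rsa_keys k|)%N ->
       1 - expR ((1 - 2 ^+ l) / 2 ^+ k) <= adv_success R l k (A l k)).
Proof.
exists (fun l _ => forger l); split.
  exists 32%N => l k; rewrite psize_forger.
  have : ((l + k).+1 <= (l + k).+1 ^ 32)%N.
    by rewrite -{1}[(l + k).+1]expn1 leq_pexp2l.
  by move: (_ ^ 32)%N => n; lia.
move=> l k l_gt0 _ keys_gt0; apply: ler_mean => // -[[p q] e].
rewrite inE => /and5P[p_pr q_pr neq_pq /andP[_ p_lt] /and3P[/andP[_ q_lt] _ co_e]].
exact: forger_key_success.
Qed.
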